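(* Let $X$, $\mathcal{B}$, $\Delta$, the map $\iota:X\to\Delta$ and the Gelfand transform be as in the context (in particular $\mathcal{B}$ vanishes nowhere on $X$). For $f\in\mathcal{B}$ and $k\in\mathbb{N}\setminus\{0\}$ let $N_k(f):=\{x\in X: |f(x)|\geq 1/k\}$. Then the closure of $\iota(N_k(f))$ in $\Delta$ is compact.
   Context: $X$ is a nonempty set and $\mathcal{B}$ is a real vector space of bounded functions $X\to\mathbb{R}$ closed under pointwise multiplication, pointwise max and min, with $f\wedge1\in\mathcal{B}$ for $f\in\mathcal{B}$. Assume that for every $x\in X$ there is $f\in\mathcal{B}$ with $f(x)\neq0$. $A(\mathcal{B})$ is the supremum-norm closure of $\mathcal{B}+i\mathcal{B}$, a commutative $C^\ast$-algebra with pointwise operations and complex conjugation as involution; $\Delta$ is its spectrum (nonzero continuous multiplicative linear functionals with the Gelfand topology), locally compact Hausdorff; $\hat a(\varphi)=\varphi(a)$ is the Gelfand transform, an isometric $^\ast$-isomorphism $A(\mathcal{B})\to C_0(\Delta)$. The map $\iota:X\to\Delta$ is defined by $\iota(x)(a)=a(x)$ for $a\in A(\mathcal{B})$. *)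

From HB Require Import structures.
From mathcomp Require Import all_boot all_order all_algebra.
From mathcomp Require Import all_classical all_reals all_analysis.
From mathcomp Require Import complex.
Import Order.TTheory GRing.Theory Num.Theory.
Import numFieldNormedType.Exports.

Set Implicit Arguments.
Unset Strict Implicit.
Unset Printing Implicit Defensive.

Local Open Scope classical_set_scope.
Local Open Scope ring_scope.
Local Open Scope complex_scope.

Definition Cplx (R : realType) : numClosedFieldType := R[i].

Definition lattice_algebra (R : realType) (X : Type) (B : set (X -> R)) : Prop :=
  B (fun _ => 0) /\
  (forall f g, B f -> B g -> B (fun x => f x + g x)) /\
  (forall (c : R) f, B f -> B (fun x => c * f x)) /\
  (forall f g, B f -> B g -> B (fun x => f x * g x)) /\
  (forall f g, B f -> B g -> B (fun x => Order.max (f x) (g x))) /\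
  (forall f g, B f -> B g -> B (fun x => Order.min (f x) (g x))) /\
  (forall f, B f -> B (fun x => Order.min (f x) 1)) /\
  (forall f, B f -> exists M : R, forall x, `|f x| <= M).

(* A(B): the sup-norm closure of B + iB, as a set of complex functions on X. *)
Definition AB (R : realType) (X : Type) (B : set (X -> R)) : set (X -> Cplx R) :=
  [set a | forall e : R, 0 < e ->
     exists f g, [/\ B f, B g &
       forall x, `|a x - ((f x +i* g x) : Cplx R)| <= (e%:C : Cplx R)]].

(* A functional on A(B) is encoded as a total map (X -> C) -> C that vanishes
   outside A(B) (so functionals on A(B) correspond bijectively to such maps). *)
Definition functional (R : realType) (X : Type) :=
  {ptws (X -> Cplx R) -> Cplx R}.

Definition is_character (R : realType) (X : Type) (B : set (X -> R))
  (phi : functional R X) : Prop :=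
  (forall a, ~ AB B a -> phi a = 0) /\
  (forall a b, AB B a -> AB B b -> phi (fun x => a x + b x) = phi a + phi b) /\
  (forall (c : Cplx R) a, AB B a -> phi (fun x => c * a x) = c * phi a) /\
  (forall a b, AB B a -> AB B b -> phi (fun x => a x * b x) = phi a * phi b) /\
  (forall a, AB B a -> forall e : R, 0 < e -> exists d : R, 0 < d /\
         forall b, AB B b -> (forall x, `|a x - b x| <= (d%:C : Cplx R)) ->
           `|phi a - phi b| <= (e%:C : Cplx R)) /\
  (exists a, AB B a /\ phi a != 0).

(* The spectrum Delta, with the Gelfand (weak-star) topology: the topology
   induced by the inclusion into the space of functionals with the topology of
   pointwise convergence on A(B). *)
Definition Delta (R : realType) (X : Type) (B : set (X -> R)) : topologicalType :=
  set_type (is_character B).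

(* Evaluation at x, as a functional on A(B) (the underlying map of iota(x)). *)
Definition ev (R : realType) (X : Type) (B : set (X -> R)) (x : X)
  : functional R X :=
  fun a => if `[< AB B a >] then a x else 0.

Definition iota_img (R : realType) (X : Type) (B : set (X -> R)) (S : set X)
  : set (Delta B) :=
  [set d | exists2 x, S x & set_val d = ev B x].

Definition Nk (R : realType) (X : Type) (f : X -> R) (k : nat) : set X :=
  [set x | k%:R^-1 <= `|f x|].

Arguments AB {R X} B _.
Arguments is_character {R X} B phi.
Arguments Delta {R X} B.
Arguments ev {R X} B x _.
Arguments iota_img {R X} B S _.
Arguments Nk {R X} f k _.

From HB Require Import structures.
From mathcomp Require Import all_boot all_order all_algebra.
From mathcomp Require Import all_classical all_reals all_analysis.
From mathcomp Require Import complex.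
Import Order.TTheory GRing.Theory Num.Theory.
Import numFieldNormedType.Exports.
Local Open Scope classical_set_scope.
Local Open Scope ring_scope.
Local Open Scope complex_scope.

(* A character [phi] of the commutative C*-algebra A(B) is contractive,
   [|phi a| <= sup |a|]: otherwise [b := a / phi a] would satisfy
   [sup |b| < 1] and [phi (b ^+ n) = 1] for all [n], contradicting continuity
   at [0].  Hence, viewed as functionals, the characters [d] with
   [|d f| >= 1/k] form the intersection of a Tychonoff product of discs with
   closed conditions (linearity, multiplicativity, [|phi f| >= 1/k]); the last
   condition makes such a functional nonzero, and boundedness gives its
   continuity, so this set is exactly the image of a closed subset of the
   spectrum.  The latter is therefore compact and contains [iota (N_k f)]. *)

Section ComplexNorm.
Variable R : realType.
Local Notation C := (Cplx R).

Lemma normc_real (a : R) : `|(a%:C : C)| = `|a|%:C.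
Proof. by rewrite normc_def /= expr0n addr0 sqrtr_sqr. Qed.

Lemma mulc_def (a b c d : R) :
  (a +i* b) * (c +i* d) = (a * c - b * d) +i* (a * d + b * c) :> C.
Proof. by []. Qed.

Lemma normc_i : `|'i| = 1 :> C.
Proof. by rewrite normc_def /= expr0n add0r expr1n sqrtr1. Qed.

Lemma normc_le_ReIm (z : C) : `|z| <= (`|complex.Re z| + `|complex.Im z|)%:C.
Proof.
rewrite [X in `|X|]complexE rmorphD /= -!normc_real.
apply: le_trans (ler_normD _ _) _.
by rewrite normrM normc_i mul1r.
Qed.

Lemma normc_ge_Im (z : C) : `|complex.Im z|%:C <= `|z|.
Proof.
by have := normc_ge_Re (z * 'i); rewrite ReiNIm normrN normrM normc_i mulr1.
Qed.

Lemma normc_sub_le0 (u v : C) : `|u - v| <= 0%:C -> u = v.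
Proof. by rewrite rmorph0 normr_le0 subr_eq0 => /eqP. Qed.

Lemma continuous_real_complex : continuous (fun x : R => (x%:C : C)).
Proof.
move=> x; apply/cvgrPdist_lt => -[er ei]; rewrite ltcE /= => /andP[/eqP -> e0].
near=> y; rewrite -rmorphB normc_real ltcR.
by near: y; move/cvgrPdist_lt: (@cvg_id _ (nbhs x)); exact.
Unshelve. all: end_near. Qed.

Lemma continuous_complex_pair : continuous (fun p : R * R => (p.1 +i* p.2 : C)).
Proof.
have -> : (fun p : R * R => (p.1 +i* p.2 : C)) =
    (fun p => (p.1)%:C) + ((fun _ => 'i) \* (fun p => (p.2)%:C)).
  by apply/funext => p; rewrite [LHS]complexE.
move=> p; apply: continuousD.
  by apply: (continuous_comp _ (continuous_real_complex _)); exact: cvg_fst.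
apply: (@continuousM C); first exact: cvg_cst.
by apply: (continuous_comp _ (continuous_real_complex _)); exact: cvg_snd.
Qed.

Lemma compact_complex_box (M : R) :
  compact [set z : C | `|complex.Re z| <= M /\ `|complex.Im z| <= M].
Proof.
have -> : [set z : C | `|complex.Re z| <= M /\ `|complex.Im z| <= M] =
    (fun p : R * R => p.1 +i* p.2) @` (`[-M, M] `*` `[-M, M]).
  apply/seteqP; split.
    by case=> a b /= [ha hb]; exists (a, b) => //; rewrite /= !in_itv /= -!ler_norml.
  by move=> z [[a b] [/=]]; rewrite !in_itv /= -!ler_norml => ha hb <-.
apply: continuous_compact; first exact/continuous_subspaceT/continuous_complex_pair.
by apply: compact_setX; exact: segment_compact.
Qed.

Lemma closed_normc_le (r : R) : closed [set z : C | `|z| <= r%:C].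
Proof.
rewrite -openC openE => z /= /negP; rewrite -real_ltNge ?normr_real ?complex_real //.
move=> rz; apply/nbhs_ballP; exists (`|z| - r%:C); first by rewrite /= subr_gt0.
move=> w; rewrite -ball_normE /= => zw wr.
have := le_lt_trans (lerB_dist z w) zw.
by rewrite ltrD2l ltrN2 => /lt_le_trans/(_ wr); rewrite ltxx.
Qed.

Lemma closed_normc_ge (r : R) : closed [set z : C | r%:C <= `|z|].
Proof.
rewrite -openC openE => z /= /negP; rewrite -real_ltNge ?normr_real ?complex_real //.
move=> zr; apply/nbhs_ballP; exists (r%:C - `|z|); first by rewrite /= subr_gt0.
move=> w; rewrite -ball_normE /= => zw rw.
have := lerB_dist w z; rewrite distrC => /le_lt_trans/(_ zw).
by rewrite ltrBlDl addrC subrK => /lt_le_trans/(_ rw); rewrite ltxx.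
Qed.

Section ClosedConditions.
Variable T : topologicalType.

Lemma closed_norm_le (w : T -> C) (r : R) :
  continuous w -> closed [set t | `|w t| <= r%:C].
Proof. by move/continuous_closedP => /(_ _ (closed_normc_le r)). Qed.

Lemma closed_norm_ge (w : T -> C) (r : R) :
  continuous w -> closed [set t | r%:C <= `|w t|].
Proof. by move/continuous_closedP => /(_ _ (closed_normc_ge r)). Qed.

Lemma closed_norm_le_family (I : Type) (P : I -> Prop) (w : I -> T -> C)
    (r : I -> R) : (forall i, continuous (w i)) ->
  closed [set t | forall i, P i -> `|w i t| <= (r i)%:C].
Proof.
move=> cw; rewrite (_ : mkset _ = \bigcap_(i in P) [set t | `|w i t| <= (r i)%:C]).
  by apply: closed_bigI => i _; exact: closed_norm_le.
by apply/seteqP; split => t /= h i; apply: h.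
Qed.

Lemma closed_eq_family2 (I J : Type) (P : I -> J -> Prop) (g h : I -> J -> T -> C) :
  (forall i j, continuous (g i j)) -> (forall i j, continuous (h i j)) ->
  closed [set t | forall i j, P i j -> g i j t = h i j t].
Proof.
move=> cg ch; rewrite (_ : mkset _ = [set t | forall ij : I * J, P ij.1 ij.2 ->
    `|g ij.1 ij.2 t - h ij.1 ij.2 t| <= (0 : R)%:C]).
  by apply: closed_norm_le_family => -[i j] t; exact: continuousB (cg i j t) (ch i j t).
apply/seteqP; split => t /= e; first by move=> [i j] /e ->; rewrite subrr normr0 rmorph0.
by move=> i j Pij; apply: normc_sub_le0; exact: (e (i, j)).
Qed.

End ClosedConditions.
End ComplexNorm.

Lemma compact_set_val (T : topologicalType) (P : set T) (K : set (set_type P)) :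
  compact (set_val @` K) -> compact K.
Proof.
move=> cK F PF FK.
have FvK : (set_val @ F) (set_val @` K).
  by apply: (@filterS _ F _ K (set_val @^-1` (set_val @` K))) FK => y Ky; exists y.
have [_ [[q Kq <-] clq]] := cK (set_val @ F) (fmap_proper_filter _ PF) FvK.
exists q; split => // A U FA.
rewrite nbhsE => -[V [[W oW WV] Vq] VU].
have FvA : (set_val @ F) (set_val @` A).
  by apply: (@filterS _ F _ A (set_val @^-1` (set_val @` A))) FA => y Ay; exists y.
have [_ [[y Ay <-] Wy]] : (set_val @` A `&` W) !=set0.
  by apply: clq FvA _; apply: open_nbhs_nbhs; split => //; rewrite -WV in Vq.
by exists y; split => //; apply: VU; rewrite -WV.
Qed.

Section GelfandAlgebra.
Variables (R : realType) (X : Type) (B : set (X -> R)).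
Hypothesis HB : lattice_algebra B.
Local Notation C := (Cplx R).

Let B0 : B (fun _ => 0). Proof. by case: HB. Qed.
Let BD f g : B f -> B g -> B (fun x => f x + g x).
Proof. by case: HB => _ [h _]; exact: h. Qed.
Let BZ (c : R) f : B f -> B (fun x => c * f x).
Proof. by case: HB => _ [_ [h _]]; exact: h. Qed.
Let BM f g : B f -> B g -> B (fun x => f x * g x).
Proof. by case: HB => _ [_ [_ [h _]]]; exact: h. Qed.
Let B_bounded f : B f -> exists M : R, forall x, `|f x| <= M.
Proof. by case: HB => _ [_ [_ [_ [_ [_ [_ h]]]]]]; exact: h. Qed.

Lemma AB_real f : B f -> AB B (fun x => (f x)%:C).
Proof.
move=> Bf e e0; exists f, (fun _ => 0); split => // x.
by rewrite complexr0 subrr normr0 lecR ltW.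
Qed.

Lemma AB0 : AB B (fun _ => 0).
Proof.
by move=> e e0; exists (fun _ => 0), (fun _ => 0); split => // x; rewrite subrr normr0 lecR ltW.
Qed.

Lemma ABD a b : AB B a -> AB B b -> AB B (fun x => a x + b x).
Proof.
move=> Aa Ab e e0; have e2 : 0 < e / 2 by rewrite divr_gt0.
have [f1 [g1 [Bf1 Bg1 h1]]] := Aa _ e2; have [f2 [g2 [Bf2 Bg2 h2]]] := Ab _ e2.
exists (fun x => f1 x + f2 x), (fun x => g1 x + g2 x); split; try exact: BD.
move=> x; rewrite (_ : _ +i* _ = (f1 x +i* g1 x) + (f2 x +i* g2 x)) //.
rewrite opprD addrACA (splitr e) rmorphD /=.
by apply: le_trans (ler_normD _ _) _; exact: lerD.
Qed.

Lemma AB_bounded a : AB B a -> exists M : R, 0 <= M /\ forall x, `|a x| <= M%:C.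
Proof.
move=> /(_ 1 ltr01) [f [g [Bf Bg h]]].
have [[Mf hf] [Mg hg]] := (B_bounded _ Bf, B_bounded _ Bg).
exists (1 + (`|Mf| + `|Mg|)); split; first by rewrite addr_ge0.
move=> x; rewrite -(subrK (f x +i* g x) (a x)) rmorphD /=.
apply: le_trans (ler_normD _ _) (lerD (h x) _).
apply: le_trans (normc_le_ReIm R (f x +i* g x)) _; rewrite lecR /=.
by apply: lerD; [apply: le_trans (hf x) _ | apply: le_trans (hg x) _]; exact: ler_norm.
Qed.

Lemma ABZ (c : C) a : AB B a -> AB B (fun x => c * a x).
Proof.
case: c => cr ci Aa e e0.
set N := `|cr| + `|ci|; have N1 : 0 < N + 1 by rewrite ltr_wpDl ?addr_ge0.
have [f [g [Bf Bg h]]] := Aa _ (divr_gt0 e0 N1).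
exists (fun x => cr * f x + (- ci) * g x), (fun x => ci * f x + cr * g x).
split; [by apply: BD; exact: BZ | by apply: BD; exact: BZ | move=> x].
rewrite (_ : (cr * f x + - ci * g x) +i* _ = (cr +i* ci) * (f x +i* g x)).
  2: by rewrite mulc_def mulNr (addrC (ci * f x)).
rewrite -mulrBr normrM.
apply: le_trans (ler_pM _ _ (normc_le_ReIm R (cr +i* ci)) (h x)) _ => //.
rewrite -rmorphM lecR mulrA ler_pdivrMr // mulrC ler_pM2l // lerDl //.
Qed.

Lemma ABM a b : AB B a -> AB B b -> AB B (fun x => a x * b x).
Proof.
move=> Aa Ab e e0.
have [[Ma [Ma0 hMa]] [Mb [Mb0 hMb]]] := (AB_bounded _ Aa, AB_bounded _ Ab).
set K := Ma + Mb + 1; have K0 : 0 < K by rewrite ltr_wpDl ?addr_ge0.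
set d := Num.min 1 (e / K); have d0 : 0 < d by rewrite lt_min ltr01 divr_gt0.
have dK : d * K <= e by rewrite -ler_pdivlMr // ge_min lexx orbT.
have [f1 [g1 [Bf1 Bg1 h1]]] := Aa _ d0; have [f2 [g2 [Bf2 Bg2 h2]]] := Ab _ d0.
exists (fun x => f1 x * f2 x + (-1) * (g1 x * g2 x)),
       (fun x => f1 x * g2 x + g1 x * f2 x).
split; [by apply: BD; [exact: BM | apply: BZ; exact: BM] | | move=> x].
  by apply: BD; exact: BM.
set p := f1 x +i* g1 x; set q := f2 x +i* g2 x.
rewrite (_ : (f1 x * f2 x + _) +i* _ = p * q); last by rewrite mulc_def mulN1r.
have hq : `|q| <= (Mb + 1)%:C.
  rewrite -(subrK (b x) q) rmorphD /= addrC.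
  by apply: le_trans (ler_normD _ _) (lerD (hMb x) _); rewrite distrC (le_trans (h2 x)) ?lecR ?ge_min ?lexx.
rewrite (_ : _ - _ = a x * (b x - q) + (a x - p) * q); last first.
  by rewrite mulrBr mulrBl addrA subrK.
apply: le_trans (ler_normD _ _) _; rewrite !normrM.
apply: (@le_trans _ _ ((Ma * d)%:C + (d * (Mb + 1))%:C)).
  by apply: lerD; rewrite rmorphM /=; apply: ler_pM.
by rewrite -rmorphD lecR (le_trans _ dK) // /K mulrC -mulrDr -addrA.
Qed.

Lemma ABX a n : AB B a -> AB B (fun x => a x ^+ n.+1).
Proof.
move=> Aa; elim: n => [|n IH]; first by under eq_fun do rewrite expr1.
by under eq_fun do rewrite exprS; exact: ABM.
Qed.

Section CharacterBound.
Variable phi : functional R X.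
Hypothesis Hphi : is_character B phi.

Let phiZ c a : AB B a -> phi (fun x => c * a x) = c * phi a.
Proof. by case: Hphi => _ [_ [h _]]; exact: h. Qed.
Let phiM a b : AB B a -> AB B b -> phi (fun x => a x * b x) = phi a * phi b.
Proof. by case: Hphi => _ [_ [_ [h _]]]; exact: h. Qed.

Lemma character0 : phi (fun _ => 0) = 0.
Proof.
rewrite -[RHS](mul0r (phi (fun _ => 0))) -(phiZ _ _ AB0).
by congr phi; apply/funext => x; rewrite mul0r.
Qed.

Lemma characterX a n : AB B a -> phi (fun x => a x ^+ n.+1) = phi a ^+ n.+1.
Proof.
move=> Aa; elim: n => [|n IH]; first by under eq_fun do rewrite expr1.
rewrite (_ : (fun x => _) = (fun x => a x * a x ^+ n.+1)); last first.
  by apply/funext => x; rewrite exprS.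
by rewrite (phiM _ _ Aa (ABX _ n Aa)) IH -exprS.
Qed.

Lemma character_small_bound (e : R) : 0 < e -> exists2 d : R, 0 < d &
  forall b, AB B b -> (forall x, `|b x| <= d%:C) -> `|phi b| <= e%:C.
Proof.
case: Hphi => _ [_ [_ [_ [cont _]]]] e0; have [d [d0 hd]] := cont _ AB0 e e0.
exists d => // b Ab bd; move: (hd b Ab); rewrite character0 sub0r normrN; apply=> x.
by rewrite sub0r normrN.
Qed.

(* The powers of [b] tend to [0] uniformly, while [phi] would keep the value
   [1] on them. *)
Lemma character_neq1 b (r : R) : AB B b -> 0 <= r < 1 ->
  (forall x, `|b x| <= r%:C) -> phi b != 1.
Proof.
move=> Ab /andP[r0 r1] br; apply/eqP => b1.
have bX n x : `|b x ^+ n.+1| <= (r ^+ n.+1)%:C.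
  rewrite normrX rmorphXn /=; apply: (@lerXn2r _ n.+1 `|b x| r%:C) (br x).
    by rewrite nnegrE normr_ge0.
  by rewrite nnegrE ler0c.
have half0 : 0 < 2^-1 :> R by rewrite invr_gt0.
have [d d0 hd] := character_small_bound _ half0.
have r1' : `|r| < 1 by rewrite ger0_norm.
have [N _ hN] := cvg_expr r1' (nbhsx_ballx 0 d d0).
have := hN N.+1 (leqnSn N); rewrite /ball /= sub0r normrN ger0_norm ?exprn_ge0 //.
move=> rNd; have := hd _ (ABX _ N Ab) (fun x => le_trans (bX N x) _).
rewrite lecR ltW // characterX // b1 expr1n normr1 -(rmorph1 (real_complex R)).
by move=> /(_ isT); rewrite lecR invf_ge1 ?ltr0n // lern1.
Qed.

Lemma character_norm_le a (M : R) : AB B a -> 0 <= M ->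
  (forall x, `|a x| <= M%:C) -> `|phi a| <= M%:C.
Proof.
move=> Aa M0 aM; rewrite real_leNgt ?normr_real ?complex_real //; apply/negP.
set l := phi a; have [rl lE] : exists rl, `|l| = rl%:C by eexists; exact: normc_def.
rewrite lE ltcR => Mrl; have rl0 : 0 < rl by apply: le_lt_trans Mrl.
have l0 : l != 0 by rewrite -normr_eq0 lE (inj_eq (@complexI _)) gt_eqF.
have r01 : 0 <= M / rl < 1 by rewrite divr_ge0 ?(ltW rl0) //= ltr_pdivrMr // mul1r.
have bM x : `|l^-1 * a x| <= (M / rl)%:C.
  rewrite normrM normrV ?unitfE // lE -fmorphV mulrC rmorphM /=.
  by rewrite ler_wpM2r // ler0c invr_ge0 ltW.
by have := character_neq1 _ _ (ABZ l^-1 _ Aa) r01 bM; rewrite phiZ // mulVf ?eqxx.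
Qed.

End CharacterBound.

(* [phi a] ranges over the disc of radius [sup |a|]; the disc degenerates to
   [0] outside [A(B)], where functionals are required to vanish. *)
Definition spectral_disc (a : X -> C) : set C :=
  [set z | forall M : R, 0 <= M /\ (AB B a -> forall x, `|a x| <= M%:C) ->
     `|z| <= M%:C].

Lemma compact_spectral_disc a : compact (spectral_disc a).
Proof.
have [M [M0 aM]] : exists M : R, 0 <= M /\ (AB B a -> forall x, `|a x| <= M%:C).
  have [Aa|nAa] := pselect (AB B a); last by exists 0.
  by have [M [M0 aM]] := AB_bounded _ Aa; exists M.
apply: subclosed_compact (compact_complex_box R M) _.
  by apply: closed_norm_le_family => _ z; exact: cvg_id.
move=> z /(_ M (conj M0 aM)) zM.
by split; rewrite -lecR; apply: le_trans zM; [exact: normc_ge_Re | exact: normc_ge_Im].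
Qed.

Definition gelfand_box : set (functional R X) :=
  [set phi | forall a, spectral_disc a (phi a)].

Lemma compact_gelfand_box : compact gelfand_box.
Proof. exact: (@tychonoff (X -> C) (fun _ => C) spectral_disc compact_spectral_disc). Qed.

Definition algebra_morphisms : set (functional R X) :=
  [set phi | [/\ forall a b, AB B a /\ AB B b ->
                   phi (fun x => a x + b x) = phi a + phi b,
                 forall c a, AB B a -> phi (fun x => c * a x) = c * phi a &
                 forall a b, AB B a /\ AB B b ->
                   phi (fun x => a x * b x) = phi a * phi b]].

Lemma closed_algebra_morphisms : closed algebra_morphisms.
Proof.
have proj u : continuous (fun phi : functional R X => phi u).
  exact: proj_continuous.
rewrite (_ : algebra_morphisms = [set phi | forall a b, AB B a /\ AB B b ->
      phi (fun x => a x + b x) = phi a + phi b] `&`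
    [set phi | forall c a, AB B a -> phi (fun x => c * a x) = c * phi a] `&`
    [set phi | forall a b, AB B a /\ AB B b ->
      phi (fun x => a x * b x) = phi a * phi b]).
  apply: closedI; first apply: closedI.
  - apply: closed_eq_family2 => i j phi; first exact: proj.
    exact: continuousD (proj i phi) (proj j phi).
  - apply: closed_eq_family2 => i j phi; first exact: proj.
    exact: (@continuousM C) (cvg_cst _) (proj j phi).
  - apply: closed_eq_family2 => i j phi; first exact: proj.
    exact: (@continuousM C) (proj i phi) (proj j phi).
apply/seteqP; split => phi /=.
  by case=> h1 h2 h3; split.
by case=> -[h1 h2] h3; split.
Qed.

Lemma character_gelfand_box phi : is_character B phi -> gelfand_box phi.
Proof.
move=> chi a M [M0 aM]; have [Aa|nAa] := pselect (AB B a).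
  exact: (@character_norm_le phi chi a M Aa M0 (aM Aa)).
by case: chi => vanish _; rewrite vanish // normr0 ler0c.
Qed.

Lemma character_algebra_morphism phi : is_character B phi -> algebra_morphisms phi.
Proof.
case=> _ [phiD [phiZ [phiM _]]].
by split=> [a b [] | // | a b []]; [exact: phiD | exact: phiM].
Qed.

(* Bounded linear functionals are continuous. *)
Lemma gelfand_box_character phi a0 :
  gelfand_box phi -> algebra_morphisms phi -> AB B a0 -> phi a0 != 0 ->
  is_character B phi.
Proof.
move=> box [phiD phiZ phiM] Aa0 nz; split.
  move=> a nAa; apply: normc_sub_le0; rewrite subr0.
  by apply: box; split=> // /nAa.
split; first by move=> a b Aa Ab; exact: phiD.
split; first exact: phiZ.
split; first by move=> a b Aa Ab; exact: phiM.
split; last by exists a0.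
move=> a Aa e e0; exists e; split=> // b Ab ab.
have Anb : AB B (fun x => -1 * b x) by exact: ABZ.
rewrite -mulN1r -(phiZ _ _ Ab) -(phiD _ _ (conj Aa Anb)).
apply: box; split=> [|_ x]; first exact: ltW.
by rewrite mulN1r; exact: ab.
Qed.

Section Level.
Variables (f : X -> R) (e : R).
Hypotheses (Bf : B f) (e0 : 0 < e).
Let fC := fun x => (f x)%:C.

Definition character_level : set (Delta B) := [set d | e%:C <= `|set_val d fC|].

Lemma image_character_level : set_val @` character_level =
  gelfand_box `&` algebra_morphisms `&` [set phi | e%:C <= `|phi fC|].
Proof.
apply/seteqP; split=> [_ [d le <-]|phi [[box alg] le]].
  have chi : is_character B (set_val d) := set_valP d.
  by split=> //; split; [exact: character_gelfand_box | exact: character_algebra_morphism].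
have nz : phi fC != 0.
  by apply: contraTneq le => ->; rewrite normr0 -(rmorph0 (real_complex R)) lecR -ltNge.
by exists (SigSub (mem_set (gelfand_box_character _ _ box alg (AB_real _ Bf) nz))).
Qed.

Lemma compact_character_level : compact character_level.
Proof.
apply: compact_set_val; rewrite image_character_level -setIA.
apply: compact_closedI compact_gelfand_box (closedI closed_algebra_morphisms _).
apply: closed_norm_ge; exact: proj_continuous.
Qed.

Lemma closed_character_level : closed character_level.
Proof.
have cv : continuous (set_val : Delta B -> functional R X).
  exact: (@initial_continuous (Delta B) (functional R X) set_val).
apply: (@closed_norm_ge R (Delta B) (fun d => set_val d fC) e) => d.
exact: continuous_comp (cv d) (@proj_continuous (X -> C) (fun _ => C) fC _).
Qed.

Lemma compact_closure_iota_level :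
  compact (closure (iota_img B [set x | e <= `|f x|])).
Proof.
apply: (subclosed_compact (@closed_closure _ _) compact_character_level).
rewrite [X in _ `<=` X]((closure_id _).1 closed_character_level); apply: closureS.
move=> d [x fx dx]; rewrite /character_level /= dx /ev.
by rewrite (asboolT (AB_real _ Bf)) /fC normc_real lecR.
Qed.

End Level.
End GelfandAlgebra.

Theorem mainTheorem6 (R : realType) (X : Type) (B : set (X -> R)) :
  inhabited X ->
  lattice_algebra B ->
  (forall x : X, exists f, B f /\ f x != 0) ->
  forall f : X -> R, B f -> forall k : nat, (0 < k)%N ->
    compact (closure (iota_img B (Nk f k))).
Proof.
move=> _ HB _ f Bf k k0.
by apply: compact_closure_iota_level HB f _ Bf _; rewrite invr_gt0 ltr0n.
Qed.
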